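(* For every nonzero $f\in S$, $\operatorname{ann}_S\big(D/D(f)\big)=S\cdot f$.
   Context: $\mathbb K$ is a field of characteristic zero, $S=\mathbb K[x_1,\dots,x_n]$, $D=\mathrm{Der}_{\mathbb K}(S)$, the free $S$-module with basis $\partial_i=\partial/\partial x_i$. For $g\in S$ and $e\ge1$, $D(g;e)=\{\delta\in D:\delta(g)\in g^eS\}$. For nonzero $f$ with factorization $f=c f_1^{e_1}\cdots f_r^{e_r}$ into pairwise non-associate irreducibles ($c\in\mathbb K^*$), $D(f)=\bigcap_i D(f_i;e_i)$. *)

From HB Require Import structures.
From mathcomp Require Import all_boot all_order all_algebra.
Set Implicit Arguments. Unset Strict Implicit. Unset Printing Implicit Defensive.
Import Order.TTheory GRing.Theory Num.Theory.
Local Open Scope ring_scope.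

(* S = K[x_1,...,x_n], built as the iterated polynomial ring
   K[x_1][x_2]...[x_n]  (mpoly K 0 = K, mpoly K n.+1 = {poly mpoly K n}). *)
Fixpoint mpoly (K : fieldType) (n : nat) : idomainType :=
  match n with
  | 0 => K
  | n'.+1 => ({poly mpoly K n'} : idomainType)
  end.

(* partial derivative d/dx_i on mpoly K n; the outermost variable has the
   largest index (ord_max), inner variables are differentiated coefficientwise *)
Fixpoint pderiv (K : fieldType) (n : nat) : 'I_n -> mpoly K n -> mpoly K n :=
  match n return 'I_n -> mpoly K n -> mpoly K n with
  | 0 => fun _ p => p
  | n'.+1 => fun i (p : {poly mpoly K n'}) =>
      match unlift ord_max i with
      | None => deriv p
      | Some j => map_poly (@pderiv K n' j) p
      end
  end.

(* Der_K(S): the free S-module with basis the partial derivatives;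
   a derivation sum_i a_i d_i is represented by its coefficient vector a. *)
Definition der (K : fieldType) (n : nat) := 'I_n -> mpoly K n.

Definition der_app (K : fieldType) (n : nat) (delta : der K n) (g : mpoly K n)
  : mpoly K n := \sum_(i < n) delta i * pderiv i g.

Definition der_scale (K : fieldType) (n : nat) (s : mpoly K n) (delta : der K n)
  : der K n := fun i => s * delta i.

Definition mdvd (K : fieldType) (n : nat) (a b : mpoly K n) : Prop :=
  exists q : mpoly K n, b = q * a.

Definition mirreducible (K : fieldType) (n : nat) (g : mpoly K n) : Prop :=
  g != 0 /\ g \isn't a GRing.unit /\
  forall a b : mpoly K n, g = a * b -> a \is a GRing.unit \/ b \is a GRing.unit.

Definition DerLog (K : fieldType) (n : nat) (g : mpoly K n) (e : nat) (delta : der K n)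
  : Prop := mdvd (g ^+ e) (der_app delta g).

(* D(f) = intersection of D(f_i;e_i) over the irreducible factors f_i of f,
   e_i being the exact multiplicity of f_i in f (g^e | f and not g^(e+1) | f). *)
Definition DerLogf (K : fieldType) (n : nat) (f : mpoly K n) (delta : der K n) : Prop :=
  forall (g : mpoly K n) (e : nat), mirreducible g -> (0 < e)%N ->
    mdvd (g ^+ e) f -> ~ mdvd (g ^+ e.+1) f -> DerLog g e delta.

Definition ann_quot (K : fieldType) (n : nat) (f : mpoly K n) (s : mpoly K n) : Prop :=
  forall delta : der K n, DerLogf f (der_scale s delta).

From HB Require Import structures.
From mathcomp Require Import all_boot all_order all_algebra.
From Stdlib Require Import Classical.
Set Implicit Arguments. Unset Strict Implicit. Unset Printing Implicit Defensive.
Import GRing.Theory.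
Local Open Scope ring_scope.

(* If f divides s, then (s delta)(g) is a multiple of f, hence of every power
   g^e dividing f, so s delta lies in D(f).  Conversely, let s annihilate
   D/D(f) and let g^e divide f exactly, g irreducible.  In characteristic zero
   g does not divide some partial derivative d_i g, and s d_i in D(g;e) means
   g^e | s * d_i g; since g is prime, g^e | s.  Every prime power dividing f
   therefore divides s, and unique factorization gives f | s.

   We work in integral domains
   with a "factorization norm" mu : R -> nat (additive on products, zero only
   on units) in which irreducibles are prime: there, factorizations exist and
   divisibility is detected by (exact) prime powers.  Gauss' lemma transfers
   this structure from R to R[X] with the norm deg p + mu (lead_coef p), so it
   holds for S = K[x_1]...[x_n] by induction on n. *)

Lemma exists_min_measure (T : Type) (P : T -> Prop) (m : T -> nat) (x : T) :
  P x -> exists2 y, P y & forall z, P z -> (m y <= m z)%N.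
Proof.
move=> Px; apply: NNPP => nomin.
suff noP : forall k y, m y = k -> ~ P y by exact: noP _ x erefl Px.
elim/ltn_ind=> k IH y my Py; apply: nomin; exists y => // z Pz.
rewrite leqNgt; apply/negP => lt_zy.
by apply: (IH (m z) _ z erefl Pz); rewrite -my.
Qed.

Lemma exists_last_above (Q : nat -> Prop) (e B : nat) :
  Q e -> (forall k, Q k -> (k <= B)%N) -> exists m, [/\ (e <= m)%N, Q m & ~ Q m.+1].
Proof.
move=> Qe QB; pose P m := (e <= m)%N /\ ~ Q m.+1.
have PB : P B by split; [exact: QB | move/QB; rewrite ltnn].
have [m [le_em nQSm] minm] := exists_min_measure id PB.
exists m; split=> //; have [<- //|ne_em] := eqVneq e m.
have lt_em : (e < m)%N by rewrite ltn_neqAle ne_em.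
case: m lt_em {le_em ne_em nQSm} minm => // m lt_em minm.
apply: NNPP => nQm; have le_em : (e <= m)%N by rewrite -ltnS.
by have := minm m (conj le_em nQm); rewrite ltnn.
Qed.

(* Divisibility, irreducible and prime elements in an integral domain.  On
   S = mpoly K n these are definitionally mdvd and mirreducible. *)
Section Divisibility.
Variable R : idomainType.
Implicit Types a b c g u x : R.

Definition divides a b : Prop := exists q, b = q * a.

Definition irreducible g : Prop :=
  [/\ g != 0, g \isn't a GRing.unit &
      forall a b, g = a * b -> a \is a GRing.unit \/ b \is a GRing.unit].

Definition prime_element g : Prop :=
  [/\ g != 0, g \isn't a GRing.unit &
      forall a b, divides g (a * b) -> divides g a \/ divides g b].

Lemma divides_refl a : divides a a. Proof. by exists 1; rewrite mul1r. Qed.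
Lemma divides0 a : divides a 0. Proof. by exists 0; rewrite mul0r. Qed.
Lemma divides_trans a b c : divides a b -> divides b c -> divides a c.
Proof. by move=> [q ->] [r ->]; exists (r * q); rewrite mulrA. Qed.
Lemma divides_mull a b c : divides a b -> divides a (c * b).
Proof. by move=> [q ->]; exists (c * q); rewrite mulrA. Qed.
Lemma divides_mulr a b c : divides a b -> divides a (b * c).
Proof. by rewrite mulrC; apply: divides_mull. Qed.
Lemma divides_add a b c : divides a b -> divides a c -> divides a (b + c).
Proof. by move=> [q ->] [r ->]; exists (q + r); rewrite mulrDl. Qed.
Lemma divides_sub a b c : divides a b -> divides a c -> divides a (b - c).
Proof. by move=> hb [r ->]; apply: divides_add => //; exists (- r); rewrite mulNr. Qed.
Lemma divides_unit u a : u \is a GRing.unit -> divides u a.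
Proof. by move=> hu; exists (a / u); rewrite divrK. Qed.
Lemma divides_exp g e e' : (e <= e')%N -> divides (g ^+ e) (g ^+ e').
Proof. by move=> le_ee'; rewrite -(subnK le_ee') exprD; exists (g ^+ (e' - e)). Qed.

Lemma divides_mul2r a b c : c != 0 -> divides (a * c) (b * c) -> divides a b.
Proof. by move=> c0 [q]; rewrite mulrA => /(mulIf c0) ->; exists q. Qed.
Lemma divides_unit_mull u a b : u \is a GRing.unit -> divides a (u * b) -> divides a b.
Proof. by move=> hu [q hq]; exists (u^-1 * q); rewrite -mulrA -hq mulKr. Qed.

Lemma prime_power_cancel h g x e :
  prime_element h -> ~ divides h g -> divides (h ^+ e) (x * g) -> divides (h ^+ e) x.
Proof.
move=> [h0 _ hprime] hg; elim: e x => [|e IH] x.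
  by rewrite expr0 => _; exists x; rewrite mulr1.
move=> hd; have [y hy] : divides (h ^+ e) x.
  by apply: IH; apply: divides_trans hd; apply: divides_exp.
have : divides h (y * g).
  apply: (@divides_mul2r _ _ (h ^+ e)); first by rewrite expf_neq0.
  by move: hd; rewrite hy exprSr mulrAC (mulrC h).
by case/hprime => // -[z hz]; exists z; rewrite hy hz exprSr -mulrA (mulrC h).
Qed.

End Divisibility.

Section FactorizationNorm.
Variables (R : idomainType) (mu : R -> nat).
Hypothesis normM : forall a b : R, a != 0 -> b != 0 -> mu (a * b) = (mu a + mu b)%N.
Hypothesis norm0_unit : forall a : R, a != 0 -> mu a = 0%N -> a \is a GRing.unit.
Implicit Types a b c g s : R.

Lemma normX g k : g != 0 -> mu (g ^+ k) = (k * mu g)%N.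
Proof.
have mu1 : mu 1 = 0%N.
  by apply/eqP; rewrite -(eqn_add2l (mu 1)) addn0 -normM ?oner_neq0 ?mulr1.
by move=> g0; elim: k => [|k IH]; rewrite ?expr0 // exprS normM ?expf_neq0 // IH mulSn.
Qed.

Lemma norm_gt0 a : a != 0 -> a \isn't a GRing.unit -> (0 < mu a)%N.
Proof. by move=> a0 au; rewrite lt0n; apply: contra au => /eqP; apply: norm0_unit. Qed.

(* A divisor of minimal norm among the nonzero non-unit divisors is irreducible. *)
Lemma exists_irreducible_factor a : a != 0 -> a \isn't a GRing.unit ->
  exists2 g, irreducible g & divides g a.
Proof.
move=> a0 au; pose P d := [/\ d != 0, d \isn't a GRing.unit & divides d a].
have [g [g0 gu ga] ming] := @exists_min_measure _ P mu a (And3 a0 au (divides_refl a)).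
exists g => //; split=> // b c gbc.
apply: NNPP => /not_or_and [/negP bu /negP cu].
have b0 : b != 0 by apply: contraNneq g0 => b0; rewrite gbc b0 mul0r.
have c0 : c != 0 by apply: contraNneq g0 => c0; rewrite gbc c0 mulr0.
have bP : P b by split=> //; apply: divides_trans ga; rewrite gbc; exists c; rewrite mulrC.
have := ming b bP; rewrite gbc normM // -{2}[mu b]addn0 leq_add2l leqn0.
by rewrite (gtn_eqF (norm_gt0 c0 cu)).
Qed.

Hypothesis irreducible_prime : forall g : R, irreducible g -> prime_element g.

Lemma factor_ind (Q : R -> Prop) :
  (forall u, u \is a GRing.unit -> Q u) ->
  (forall p c, irreducible p -> prime_element p -> c != 0 -> Q c -> Q (p * c)) ->
  forall c, c != 0 -> Q c.
Proof.
move=> Qunit Qmul; suff QN k c : mu c = k -> c != 0 -> Q c by move=> c; exact: QN.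
elim/ltn_ind: k c => k IH c muc c0; have [cu|cu] := boolP (c \is a GRing.unit).
  exact: Qunit.
have [g hg [q cqg]] := exists_irreducible_factor c0 cu.
have q0 : q != 0 by apply: contraNneq c0 => q0; rewrite cqg q0 mul0r.
have [g0 gu _] := hg; rewrite cqg mulrC; apply: Qmul => //; first exact: irreducible_prime.
apply: (IH (mu q)) => //; rewrite -muc cqg normM //.
by rewrite -{1}[mu q]addn0 ltn_add2l norm_gt0.
Qed.

Lemma divides_of_prime_powers c : c != 0 -> forall s,
  (forall g e, irreducible g -> divides (g ^+ e) c -> divides (g ^+ e) s) -> divides c s.
Proof.
move: c; apply: factor_ind => [u hu s _|p c hp pprime c0 IH s hs].
  exact: divides_unit.
have [s1 ss1] : divides p s.
  by rewrite -[p]expr1; apply: hs; rewrite // expr1; exists c; rewrite mulrC.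
rewrite {s}ss1 in hs *.
suff [t ->] : divides c s1 by exists t; rewrite mulrAC -mulrA.
apply: IH => h e hh [q cqh]; have [h0 hu _] := hh.
have hpc : divides (h ^+ e) (p * c) by rewrite cqh; exists (p * q); rewrite mulrA.
case: (classic (divides h p)) => [[t pth]|hp']; last first.
  exact: (prime_power_cancel (irreducible_prime hh) hp' (hs h e hh hpc)).
have tu : t \is a GRing.unit.
  by have [_ _ /(_ t h pth) []] := hp => // hu'; move: hu; rewrite hu'.
have : divides (h ^+ e.+1) (s1 * p).
  by apply: hs => //; exists (t * q); rewrite pth cqh exprSr mulrACA (mulrC h).
rewrite pth mulrA exprSr => /divides_mul2r-/(_ h0).
by rewrite mulrC; apply: divides_unit_mull.
Qed.

Lemma divides_of_exact_powers c s g e : c != 0 -> irreducible g -> divides (g ^+ e) c ->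
  (forall m, (0 < m)%N -> divides (g ^+ m) c -> ~ divides (g ^+ m.+1) c ->
     divides (g ^+ m) s) ->
  divides (g ^+ e) s.
Proof.
move=> c0 [g0 gu _] gec exact_s; case: e gec => [|e] gec.
  by rewrite expr0; apply: divides_unit; apply: unitr1.
have bounded k : divides (g ^+ k) c -> (k <= mu c)%N.
  move=> [q cqg]; have q0 : q != 0 by apply: contraNneq c0 => q0; rewrite cqg q0 mul0r.
  rewrite cqg normM ?expf_neq0 // normX // (leq_trans _ (leq_addl _ _)) //.
  by rewrite leq_pmulr ?norm_gt0.
have [m [le_em gmc gmc']] := exists_last_above gec bounded.
exact: divides_trans (divides_exp _ le_em) (exact_s m (leq_trans _ le_em) gmc gmc').
Qed.

End FactorizationNorm.

Section GaussLemma.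
Variables (R : idomainType) (mu : R -> nat).
Hypothesis normM : forall a b : R, a != 0 -> b != 0 -> mu (a * b) = (mu a + mu b)%N.
Hypothesis norm0_unit : forall a : R, a != 0 -> mu a = 0%N -> a \is a GRing.unit.
Hypothesis irreducible_prime : forall g : R, irreducible g -> prime_element g.
Implicit Types (a b h p q x : {poly R}) (c d r : R).

Definition poly_norm p : nat := ((size p).-1 + mu (lead_coef p))%N.

Lemma poly_normM a b : a != 0 -> b != 0 ->
  poly_norm (a * b) = (poly_norm a + poly_norm b)%N.
Proof.
move=> a0 b0; rewrite /poly_norm size_mul // lead_coefM normM ?lead_coef_eq0 //.
move: a0 b0; rewrite -!size_poly_gt0.
by case: (size a) => // sa; case: (size b) => // sb _ _; rewrite addSn addnS /= addnACA.
Qed.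

Lemma polyC_unit c : (c%:P \is a GRing.unit) = (c \is a GRing.unit).
Proof.
rewrite poly_unitE size_polyC coefC /=.
by have [->|_] := eqVneq c 0; rewrite ?unitr0.
Qed.

Lemma poly_norm0_unit p : p != 0 -> poly_norm p = 0%N -> p \is a GRing.unit.
Proof.
move=> p0 /eqP; rewrite /poly_norm addn_eq0 => /andP [/eqP deg0 /eqP mu0].
have size1 : size p = 1%N.
  by move: p0 deg0; rewrite -size_poly_gt0; case: (size p) => // -[].
rewrite poly_unitE size1 eqxx /=; have := norm0_unit _ mu0.
by rewrite lead_coef_eq0 p0 lead_coefE size1 => ->.
Qed.

Lemma divides_polyC c d : divides c%:P d%:P <-> divides c d.
Proof.
split=> [[q dqc]|[q ->]]; last by exists q%:P; rewrite polyCM.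
by exists q`_0; have := congr1 (fun p => p`_0) dqc; rewrite coefMC coefC.
Qed.

Lemma irreducible_polyC c : irreducible c%:P -> irreducible c.
Proof.
move=> [c0 cu hc]; split; [by rewrite -polyC_eq0 | by rewrite -polyC_unit |].
by move=> a b cab; move: (hc a%:P b%:P); rewrite -polyCM cab !polyC_unit; apply.
Qed.

Definition lead_term p : {poly R} := (lead_coef p)%:P * 'X^((size p).-1).

Lemma size_sub_lead_term p : p != 0 -> (size (p - lead_term p)%R < size p)%N.
Proof.
move=> p0; have sp : (0 < size p)%N by rewrite size_poly_gt0.
rewrite -(prednK sp) ltnS; apply/leq_sizeP => j hj.
rewrite coefB coefCM coefXn.
case: (ltngtP j (size p).-1) => [|lt_j|->]; first by rewrite ltnNge hj.
  rewrite mulr0 subr0; move/leq_sizeP: (leqnn (size p)); apply.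
  by rewrite -(prednK sp).
by rewrite mulr1 -lead_coefE subrr.
Qed.

(* A prime constant remains prime in R[X]: if it divides a * b, strip the
   leading terms of a and b until one of them is divisible by it. *)
Lemma prime_polyC r : prime_element r -> forall a b,
  divides r%:P (a * b) -> divides r%:P a \/ divides r%:P b.
Proof.
move=> [_ _ rprime] a b; move: {2}(size a + size b)%N (leqnn (size a + size b)) => N.
elim: N a b => [|N IH] a b hN rab.
  by move: hN; rewrite leqn0 addn_eq0 size_poly_eq0 => /andP [/eqP -> _]; left; exact: divides0.
have [->|a0] := eqVneq a 0; first by left; exact: divides0.
have [->|b0] := eqVneq b 0; first by right; exact: divides0.
have [[q ra]|[q rb]] : divides r (lead_coef a) \/ divides r (lead_coef b).
  apply: rprime; have [q abq] := rab; exists (lead_coef q).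
  by rewrite -lead_coefM abq lead_coefM lead_coefC.
- have ra' : divides r%:P (lead_term a).
    by apply: divides_mulr; apply/divides_polyC; exists q.
  case: (IH (a - lead_term a) b) => [||ra''|rb].
  + by rewrite -ltnS (leq_trans _ hN) // ltn_add2r size_sub_lead_term.
  + by rewrite mulrBl; apply: divides_sub => //; exact: divides_mulr.
  + by left; rewrite -(subrK (lead_term a) a); exact: divides_add.
  + by right.
- have rb' : divides r%:P (lead_term b).
    by apply: divides_mulr; apply/divides_polyC; exists q.
  case: (IH a (b - lead_term b)) => [||ra|rb''].
  + by rewrite -ltnS (leq_trans _ hN) // ltn_add2l size_sub_lead_term.
  + by rewrite mulrBr; apply: divides_sub => //; exact: divides_mull.
  + by left.
  + by right; rewrite -(subrK (lead_term b) b); exact: divides_add.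
Qed.

Definition primitive p : Prop := forall r, prime_element r -> ~ divides r%:P p.

Lemma primitive_cancel p : primitive p -> forall c, c != 0 ->
  forall x, divides p (c%:P * x) -> divides p x.
Proof.
move=> prim_p; apply: (factor_ind normM norm0_unit irreducible_prime).
  by move=> u hu x; apply: divides_unit_mull; rewrite polyC_unit.
move=> r c _ rprime c0 IH x [y xy].
have : divides r%:P (y * p) by rewrite -xy polyCM -mulrA; exists (c%:P * x); rewrite mulrC.
case/(prime_polyC rprime) => [[z yz]|rp]; last by case: (prim_p r).
apply: IH; exists z; have r0 : r%:P != 0 by rewrite polyC_eq0; case: rprime.
by apply: (mulfI r0); move: xy; rewrite polyCM yz -mulrA => ->; rewrite mulrCA mulrA.
Qed.

Lemma split_constant_factor p c : c != 0 -> forall h q, c%:P * p = h * q ->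
  exists d (h' q' : {poly R}), p = h' * q' /\ h = d%:P * h'.
Proof.
move: c; apply: (factor_ind normM norm0_unit irreducible_prime).
  move=> u hu h q pqh; exists 1, h, (u^-1%:P * q); split; last by rewrite mul1r.
  by rewrite mulrCA -pqh mulrA -polyCM mulVr // mul1r.
move=> r c _ rprime c0 IH h q pqh.
have r0 : r%:P != 0 by rewrite polyC_eq0; case: rprime.
have cancel_r y z : r%:P * (c%:P * p) = r%:P * y * z -> c%:P * p = y * z.
  by rewrite -mulrA => /(mulfI r0).
have : divides r%:P (h * q) by rewrite -pqh polyCM -mulrA; exists (c%:P * p); rewrite mulrC.
case/(prime_polyC rprime) => [[h1 hh1]|[q1 qq1]].
  have [|d [h' [q' [pq' hh']]]] := IH h1 q; first apply: cancel_r.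
    by rewrite mulrA -polyCM pqh hh1 (mulrC h1).
  by exists (r * d), h', q'; split=> //; rewrite hh1 hh' polyCM mulrC mulrA.
apply: IH; apply: cancel_r.
by rewrite mulrA -polyCM pqh qq1 mulrA mulrAC (mulrC h).
Qed.

Definition lin_comb p a h : Prop := exists u v : {poly R}, h = u * p + v * a.

(* A nonzero combination h of minimal size divides every combination up to a
   nonzero constant, by pseudo-division. *)
Lemma min_lin_comb_divides p a h : lin_comb p a h -> h != 0 ->
  (forall z, lin_comb p a z -> z != 0 -> (size h <= size z)%N) ->
  forall x, lin_comb p a x -> exists2 c, c != 0 & c%:P * x = h * (x %/ h).
Proof.
move=> [u' [v' hc]] h0 minh x [u [v xc]].
pose k := lead_coef h ^+ scalp x h.
exists k; first by rewrite expf_neq0 // lead_coef_eq0.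
have divx := Pdiv.Idomain.divp_eq x h.
suff r0 : x %% h = 0 by rewrite mul_polyC divx r0 addr0 mulrC.
have small_r : (size (x %% h)%R < size h)%N by rewrite Pdiv.Idomain.ltn_modp.
apply/eqP; apply: contraTT small_r => r0.
rewrite -leqNgt; apply: minh r0; exists (k%:P * u - x %/ h * u'), (k%:P * v - x %/ h * v').
have -> : x %% h = k *: x - x %/ h * h by rewrite divx addrC addKr.
by rewrite -mul_polyC xc hc !mulrBl !mulrDr !mulrA addrACA opprD addrACA.
Qed.

Lemma irreducible_primitive p : irreducible p -> (1 < size p)%N -> primitive p.
Proof.
move=> [p0 _ pirr] sp r [r0 ru _] [q pqr].
case: (pirr q r%:P pqr) => [qu|]; last by rewrite polyC_unit; apply/negP.
move: qu sp; rewrite poly_unitE => /andP [/eqP sq _].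
by rewrite pqr mulrC size_Cmul // sq.
Qed.

(* For a nonconstant irreducible p with p
   not dividing a, a minimal nonzero combination h of p and a is (up to a
   constant) a factor of p, so it is a constant; then p divides h * b. *)
Lemma irreducible_poly_prime p : irreducible p -> prime_element p.
Proof.
move=> p_irr; have [p0 pu pirr] := p_irr.
have [sp|sp] := leqP (size p) 1.
  have pC := size1_polyC sp; rewrite pC in p_irr p0 pu *; split=> //.
  by apply: prime_polyC; apply: irreducible_prime; exact: irreducible_polyC.
have prim_p := irreducible_primitive p_irr sp.
split=> // a b pab; case: (classic (divides p a)) => pa; [by left | right].
have comb_p : lin_comb p a p by exists 1, 0; rewrite mul1r mul0r addr0.
have comb_a : lin_comb p a a by exists 0, 1; rewrite mul1r mul0r add0r.
have [h [hc h0] minh] := @exists_min_measure _ (fun h => lin_comb p a h /\ h != 0)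
  (@size R) p (conj comb_p p0).
have hdiv := min_lin_comb_divides hc h0 (fun z zc z0 => minh z (conj zc z0)).
have [c1 c10 pc1] := hdiv p comb_p.
have [d [h' [q' [pq' hh']]]] := split_constant_factor c10 pc1.
case: (pirr h' q' pq') => [h'u|q'u]; last first.
  have [c2 c20 ac2] := hdiv a comb_a; case: pa; apply: (primitive_cancel prim_p c20).
  rewrite ac2 hh' -mulrA; apply: divides_mull; apply: divides_mulr.
  by exists q'^-1; rewrite pq' mulrC mulrK.
move: h'u; rewrite poly_unitE => /andP [/eqP sh' _].
have hC : h = (d * h'`_0)%:P by rewrite hh' polyCM -size1_polyC // sh'.
have e0 : d * h'`_0 != 0 by rewrite -polyC_eq0 -hC.
apply: (primitive_cancel prim_p e0); rewrite -hC.
have [u [v ->]] := hc; rewrite mulrDl; apply: divides_add.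
  by rewrite mulrAC; apply: divides_mull; exact: divides_refl.
by rewrite -mulrA; exact: divides_mull.
Qed.

End GaussLemma.

Fixpoint mpoly_norm (K : fieldType) (n : nat) : mpoly K n -> nat :=
  match n return mpoly K n -> nat with
  | 0 => fun _ => 0%N
  | n'.+1 => poly_norm (@mpoly_norm K n')
  end.

Lemma mpoly_factorial (K : fieldType) (n : nat) :
  [/\ forall a b : mpoly K n, a != 0 -> b != 0 ->
        mpoly_norm (a * b) = (mpoly_norm a + mpoly_norm b)%N,
      forall a : mpoly K n, a != 0 -> mpoly_norm a = 0%N -> a \is a GRing.unit &
      forall g : mpoly K n, irreducible g -> prime_element g].
Proof.
elim: n => [|n [normM norm0_unit irreducible_prime]].
  split=> [//|a a0 _|g [g0 gu _]]; first by rewrite unitfE.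
  by rewrite unitfE g0 in gu.
split; [exact: poly_normM normM | exact: poly_norm0_unit norm0_unit |].
exact: irreducible_poly_prime normM norm0_unit irreducible_prime.
Qed.

Lemma mpoly_natr_eq0 (K : fieldType) (n m : nat) :
  [pchar K] =i pred0 -> (m%:R == 0 :> mpoly K n) = (m == 0%N).
Proof.
move=> hK; elim: n => [|n IH] /=; first exact: (pcharf0P K).1 hK m.
by rewrite -polyC_natr polyC_eq0 IH.
Qed.

Lemma deriv_neq0 (R : idomainType) (p : {poly R}) :
  (forall m, (m%:R == 0 :> R) = (m == 0%N)) -> (1 < size p)%N -> p^`() != 0.
Proof.
move=> char0; case sp: (size p) => [|[|k]] // _.
apply/eqP => /(congr1 (fun q : {poly R} => q`_k)); rewrite coef_deriv coef0.
apply/eqP; rewrite -mulr_natr mulf_neq0 ?char0 //.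
have : lead_coef p != 0 by rewrite lead_coef_eq0 -size_poly_gt0 sp.
by rewrite lead_coefE sp.
Qed.

Lemma not_divides_smaller (R : idomainType) (g d : {poly R}) :
  d != 0 -> (size d < size g)%N -> ~ divides g d.
Proof.
move=> d0 lt_dg [q dqg]; have q0 : q != 0 by apply: contraNneq d0 => q0; rewrite dqg q0 mul0r.
have g0 : g != 0 by apply: contraNneq d0 => g0; rewrite dqg g0 mulr0.
move: lt_dg; rewrite dqg size_mul //; move: q0; rewrite -size_poly_gt0.
by case: (size q) => // sq _; rewrite addSn /= ltnNge leq_addl.
Qed.

Lemma pderiv0 (K : fieldType) (n : nat) (i : 'I_n) : pderiv i (0 : mpoly K n) = 0.
Proof.
elim: n i => [|n IH] i //=.
by case: (unlift ord_max i) => [j|]; [exact: map_poly0 | exact: deriv0].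
Qed.

(* In characteristic zero an irreducible g does not divide some partial
   derivative of itself: differentiate in the outermost variable if g involves
   it (the derivative is nonzero of smaller degree), else use induction. *)
Lemma irreducible_not_divides_pderiv (K : fieldType) (n : nat) (g : mpoly K n) :
  [pchar K] =i pred0 -> irreducible g -> exists i : 'I_n, ~ divides g (pderiv i g).
Proof.
move=> hK; elim: n g => [|n IH] g gi; first by case: gi => g0; rewrite unitfE g0.
have [g0 _ _] := gi; have [sg|sg] := leqP (size g) 1.
  move: gi; rewrite (size1_polyC sg); set c := g`_0 => /irreducible_polyC ci.
  have [j hj] := IH c ci; exists (lift ord_max j); rewrite /= liftK => -[q hq].
  apply: hj; exists q`_0; have := congr1 (fun p : {poly mpoly K n} => p`_0) hq.
  by rewrite coef_map_id0 ?pderiv0 // coefMC !coefC.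
exists ord_max; rewrite /= unlift_none; apply: not_divides_smaller (lt_size_deriv g0).
by apply: deriv_neq0 sg => m; apply: mpoly_natr_eq0.
Qed.

Lemma irreducible_mirreducible (K : fieldType) (n : nat) (g : mpoly K n) :
  irreducible g -> mirreducible g.
Proof. by case=> g0 gu girr; split=> //; split. Qed.

Definition der_basis {K : fieldType} {n : nat} (i : 'I_n) : der K n :=
  fun j => (j == i)%:R.

Lemma der_app_scale_basis (K : fieldType) (n : nat) (s g : mpoly K n) (i : 'I_n) :
  der_app (der_scale s (der_basis i)) g = s * pderiv i g.
Proof.
rewrite /der_app /der_scale /der_basis (bigD1 i) //= eqxx mulr1 big1 ?addr0 // => j ji.
by rewrite (negbTE ji) mulr0 mul0r.
Qed.

(* Multiples of f annihilate D/D(f): (s delta)(g) is a multiple of f, hence of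
   every g^e dividing f. *)
Lemma multiple_in_DerLogf (K : fieldType) (n : nat) (f s : mpoly K n) (delta : der K n) :
  mdvd f s -> DerLogf f (der_scale s delta).
Proof.
move=> fs g e _ _ gef _; apply: (divides_trans gef).
apply: (big_ind (divides f)); [exact: divides0 | exact: divides_add |].
by move=> i _; do 2!apply: divides_mulr.
Qed.

(* An annihilator s of D/D(f) is divisible by every prime power g^e dividing f
   exactly: s d_i lies in D(g;e) for a d_i with g not dividing d_i g. *)
Lemma annihilator_exact_power (K : fieldType) (n : nat) (f s g : mpoly K n) (e : nat) :
  [pchar K] =i pred0 -> ann_quot f s -> irreducible g -> (0 < e)%N ->
  divides (g ^+ e) f -> ~ divides (g ^+ e.+1) f -> divides (g ^+ e) s.
Proof.
move=> hK hann gi e0 gef gef'; have [i gi'] := irreducible_not_divides_pderiv hK gi.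
have [_ _ irreducible_prime] := mpoly_factorial K n.
have := hann (der_basis i) g e (irreducible_mirreducible gi) e0 gef gef'.
by rewrite /DerLog der_app_scale_basis; apply: prime_power_cancel (irreducible_prime g gi) gi'.
Qed.

Theorem mainTheorem3 (K : fieldType) (hK : [pchar K] =i pred0) (n : nat)
  (f : mpoly K n) (hf : f != 0) :
  forall s : mpoly K n, ann_quot f s <-> mdvd f s.
Proof.
have [normM norm0_unit irreducible_prime] := mpoly_factorial K n.
move=> s; split=> [hann|fs delta]; last exact: multiple_in_DerLogf.
apply: (divides_of_prime_powers normM norm0_unit irreducible_prime hf) => g e gi gef.
apply: (divides_of_exact_powers normM norm0_unit hf gi gef) => m m0 gmf gmf'.
exact: annihilator_exact_power hK hann gi m0 gmf gmf'.
Qed.
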